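(* Let $d\ge 3$, $z\in(-1,1)$ and $\xi\in\mathbb S^{d-1}$. Then $$h_z^{-1}\bigl(\mathscr C_z^{\xi}\bigr)=\mathscr C_0^{\,g_z(\xi)}.$$
   Context: $\mathbb S^{d-1}=\{\xi\in\mathbb R^d:\|\xi\|=1\}$, and $\epsilon^1,\dots,\epsilon^d$ is the standard basis of $\mathbb R^d$. For $z\in(-1,1)$ and $\xi\in\mathbb S^{d-1}$ set $\mathscr C_z^{\xi}=\{\eta\in\mathbb S^{d-1}:\langle\eta,\xi\rangle=z\xi_d\}$. The maps $h_z,g_z:\mathbb S^{d-1}\to\mathbb S^{d-1}$ are $$h_z(\eta)=\sum_{i=1}^{d-1}\frac{\sqrt{1-z^2}}{1+z\eta_d}\,\eta_i\,\epsilon^i+\frac{z+\eta_d}{1+z\eta_d}\,\epsilon^d,$$ $$g_z(\xi)=\frac{1}{\sqrt{1-z^2\xi_d^2}}\Bigl(\sum_{i=1}^{d-1}\xi_i\,\epsilon^i+\sqrt{1-z^2}\,\xi_d\,\epsilon^d\Bigr).$$ The map $h_z$ is a bijection of $\mathbb S^{d-1}$. *)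

From HB Require Import structures.
From mathcomp Require Import all_boot all_order all_algebra.
From mathcomp Require Import boolp classical_sets reals.
Set Implicit Arguments. Unset Strict Implicit. Unset Printing Implicit Defensive.
Import Order.TTheory GRing.Theory Num.Theory.
Local Open Scope ring_scope.
Local Open Scope classical_set_scope.

(* Vectors of R^d are row vectors 'rV[R]_d with d = n.+1; coordinate i+1 of the
   paper is index i; the d-th (last) coordinate is ord_max. *)
Section Sphere.
Variables (R : realType) (n : nat).
Notation vec := 'rV[R]_n.+1.

Definition dotp (u v : vec) : R := \sum_(i < n.+1) u 0 i * v 0 i.
Definition enorm (u : vec) : R := Num.sqrt (dotp u u).
Definition lastc (u : vec) : R := u 0 ord_max.

Definition sphere : set vec := [set x | enorm x = 1].

Definition Ccap (z : R) (xi : vec) : set vec :=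
  [set eta | sphere eta /\ dotp eta xi = z * lastc xi].

Definition hz (z : R) (eta : vec) : vec :=
  \row_(i < n.+1)
    (if i == ord_max then (z + lastc eta) / (1 + z * lastc eta)
     else Num.sqrt (1 - z ^+ 2) / (1 + z * lastc eta) * eta 0 i).

Definition gz (z : R) (xi : vec) : vec :=
  (Num.sqrt (1 - z ^+ 2 * lastc xi ^+ 2))^-1 *:
  \row_(i < n.+1)
    (if i == ord_max then Num.sqrt (1 - z ^+ 2) * xi 0 i else xi 0 i).
End Sphere.

From HB Require Import structures.
From mathcomp Require Import all_boot all_order all_algebra.
From mathcomp Require Import boolp classical_sets reals.
From mathcomp Require Import ring lra.
Set Implicit Arguments. Unset Strict Implicit. Unset Printing Implicit Defensive.
Import Order.TTheory GRing.Theory Num.Theory.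
Local Open Scope ring_scope.
Local Open Scope classical_set_scope.

(* With s = sqrt(1 - z^2) and D = 1 + z eta_d, one computes
   <h_z(eta), xi> - z xi_d = (s / D) <eta, xi'>, where xi' is xi with its last
   coordinate multiplied by s, and g_z(xi) is a positive multiple of xi'.
   Since h_z maps the sphere into itself, both sides of the identity are the
   points eta of the sphere with <eta, xi'> = 0. *)

Section Sphere.
Variables (R : realType) (n : nat).
Notation vec := 'rV[R]_n.+1.

Definition hdotp (u v : vec) : R :=
  \sum_(i < n.+1 | i != ord_max) u 0 i * v 0 i.

Definition scale_last (a : R) (v : vec) : vec :=
  \row_(i < n.+1) (if i == ord_max then a * v 0 i else v 0 i).

Lemma dotpE (u v : vec) : dotp u v = hdotp u v + lastc u * lastc v.
Proof. by rewrite /dotp (bigD1 ord_max) //= addrC. Qed.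

Lemma hdotpC (u v : vec) : hdotp u v = hdotp v u.
Proof. by apply: eq_bigr => i _; rewrite mulrC. Qed.

Lemma hdotpp_ge0 (u : vec) : 0 <= hdotp u u.
Proof. by apply: sumr_ge0 => i _; rewrite -expr2 sqr_ge0. Qed.

Lemma dotpp_ge0 (u : vec) : 0 <= dotp u u.
Proof. by apply: sumr_ge0 => i _; rewrite -expr2 sqr_ge0. Qed.

Lemma dotpZr (a : R) (u v : vec) : dotp u (a *: v) = a * dotp u v.
Proof. by rewrite /dotp mulr_sumr; apply: eq_bigr => i _; rewrite mxE mulrCA. Qed.

Lemma dotp_scale_lastr (a : R) (u v : vec) :
  dotp u (scale_last a v) = hdotp u v + a * (lastc u * lastc v).
Proof.
rewrite dotpE /lastc mxE eqxx mulrCA; congr (_ + _).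
by apply: eq_bigr => i /negPf iN; rewrite mxE iN.
Qed.

Lemma sphereE (u : vec) : sphere u <-> dotp u u = 1.
Proof.
rewrite /sphere /enorm /=; split => [u1|->]; last exact: sqrtr1.
by rewrite -[dotp u u]sqr_sqrtr ?dotpp_ge0 // u1 expr1n.
Qed.

Lemma sphere_lastc_sqr_le1 (u : vec) : sphere u -> lastc u ^+ 2 <= 1.
Proof.
move/sphereE; rewrite dotpE -expr2 => u1.
by rewrite -u1 lerDr hdotpp_ge0.
Qed.

Lemma hdotp_hzl (z : R) (u v : vec) :
  hdotp (hz z u) v = Num.sqrt (1 - z ^+ 2) / (1 + z * lastc u) * hdotp u v.
Proof.
rewrite /hdotp mulr_sumr; apply: eq_bigr => i /negPf iN.
by rewrite mxE iN mulrA.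
Qed.

Lemma lastc_hz (z : R) (u : vec) :
  lastc (hz z u) = (z + lastc u) / (1 + z * lastc u).
Proof. by rewrite /lastc mxE eqxx. Qed.

Lemma dotp_gzr (z : R) (u v : vec) :
  dotp u (gz z v) = (Num.sqrt (1 - z ^+ 2 * lastc v ^+ 2))^-1 *
                    dotp u (scale_last (Num.sqrt (1 - z ^+ 2)) v).
Proof. exact: dotpZr. Qed.

Section Tilt.
Variables (z : R) (z_gt_m1 : -1 < z) (z_lt1 : z < 1).
Let s := Num.sqrt (1 - z ^+ 2).

Let z_sqr_lt1 : z ^+ 2 < 1.
Proof. by move: z_gt_m1 z_lt1; nra. Qed.

Let s_gt0 : 0 < s.
Proof. by rewrite sqrtr_gt0 subr_gt0. Qed.

Let s_sqr : s ^+ 2 = 1 - z ^+ 2.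
Proof. by rewrite sqr_sqrtr // subr_ge0 ltW. Qed.

Lemma hz_denom_gt0 (eta : vec) : sphere eta -> 0 < 1 + z * lastc eta.
Proof.
move/sphere_lastc_sqr_le1 => e_sqr_le1.
have : -1 <= lastc eta <= 1 by apply/andP; split; nra.
by move: z_gt_m1 z_lt1; nra.
Qed.

Lemma hz_sphere (eta : vec) : sphere eta -> sphere (hz z eta).
Proof.
move=> eta1; have D_gt0 := hz_denom_gt0 eta1.
move/sphereE: eta1; rewrite dotpE => eta1; apply/sphereE.
rewrite dotpE hdotp_hzl hdotpC hdotp_hzl lastc_hz -/s.
have -> : hdotp eta eta = 1 - lastc eta ^+ 2 by lra.
set e := lastc eta; set D := 1 + z * e.
have -> : s / D * (s / D * (1 - e ^+ 2)) + (z + e) / D * ((z + e) / D) =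
          (s ^+ 2 * (1 - e ^+ 2) + (z + e) ^+ 2) / D ^+ 2.
  by field; rewrite gt_eqF.
have -> : s ^+ 2 * (1 - e ^+ 2) + (z + e) ^+ 2 = D ^+ 2 by rewrite s_sqr /D; ring.
by rewrite divff // expf_neq0 // gt_eqF.
Qed.

Lemma dotp_hz_subr (eta v : vec) : sphere eta ->
  dotp (hz z eta) v - z * lastc v =
  s / (1 + z * lastc eta) * dotp eta (scale_last s v).
Proof.
move/hz_denom_gt0; rewrite dotpE hdotp_hzl lastc_hz dotp_scale_lastr -/s.
set e := lastc eta; set x := lastc v => D_gt0.
have -> : s / (1 + z * e) * (hdotp eta v + s * (e * x)) =
          s / (1 + z * e) * hdotp eta v + s ^+ 2 * (e * x) / (1 + z * e).
  by field; rewrite gt_eqF.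
by rewrite s_sqr; field; rewrite gt_eqF.
Qed.

Lemma Ccap_hz (eta v : vec) : sphere eta ->
  Ccap z v (hz z eta) <-> dotp eta (scale_last s v) = 0.
Proof.
move=> eta1; have E := dotp_hz_subr v eta1; rewrite /Ccap /=.
have sD_neq0 : s / (1 + z * lastc eta) != 0.
  by rewrite mulf_neq0 ?invr_eq0 ?gt_eqF ?hz_denom_gt0.
split=> [[_ hd] | hd0].
  by move: E; rewrite hd subrr => /esym/eqP; rewrite mulf_eq0 (negPf sD_neq0) => /eqP.
by split; [exact: hz_sphere | apply/eqP; rewrite -subr_eq0 E hd0 mulr0].
Qed.

Lemma Ccap0_gz (eta v : vec) : sphere v ->
  Ccap 0 (gz z v) eta <-> sphere eta /\ dotp eta (scale_last s v) = 0.
Proof.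
move/sphere_lastc_sqr_le1 => x_sqr_le1.
have c_inv_neq0 : (Num.sqrt (1 - z ^+ 2 * lastc v ^+ 2))^-1 != 0.
  by rewrite invr_eq0 gt_eqF // sqrtr_gt0; move: z_sqr_lt1; nra.
rewrite /Ccap /= mul0r dotp_gzr -/s.
split=> -[eta1 hd]; split=> //.
  by move/eqP: hd; rewrite mulf_eq0 (negPf c_inv_neq0) => /eqP.
by rewrite hd mulr0.
Qed.

End Tilt.
End Sphere.

Theorem mainTheorem1 (R : realType) (n : nat) (hn : (2 <= n)%N)
    (z : R) (hz1 : -1 < z) (hz2 : z < 1) (xi : 'rV[R]_n.+1)
    (hxi : sphere xi) :
  @sphere R n `&` (hz z @^-1` Ccap z xi) = Ccap 0 (gz z xi).
Proof.
apply/funext => eta; apply/propext; rewrite (Ccap0_gz hz1 hz2 eta hxi).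
by split=> -[eta1 C]; split=> //; apply/(Ccap_hz hz1 hz2 _ eta1).
Qed.
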